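(* Let $n\ge5$ be any integer, $r\in\mathbb Z_n$, $\mathsf V=\mathsf V(3,r)$ and $k\ge2$. Then for all $1\le i\le k-1$, on $\mathsf V^{\otimes k}$, $$(\check{\mathsf R}_i-q^{-r^2-2r}\mathrm{id})(\check{\mathsf R}_i+q^{-r^2-2r-2}\mathrm{id})(\check{\mathsf R}_i-q^{-r^2-2r-3}\mathrm{id})=0.$$
   Context: $\mathbb k$ algebraically closed of characteristic zero, $n\ge2$, $q\in\mathbb k$ a primitive $n$th root of unity. $\mathsf D_n$ is the Hopf algebra generated by $a,b,c,d$ with relations $ba=qab$, $db=qbd$, $bc=cb$, $ca=qac$, $dc=qcd$, $da-qad=1-bc$, $a^n=d^n=0$, $b^n=c^n=1$ and $\Delta(a)=a\otimes b+1\otimes a$, $\Delta(d)=d\otimes c+1\otimes d$, $\Delta(b)=b\otimes b$, $\Delta(c)=c\otimes c$. For $1\le\ell\le n$, $s\in\mathbb Z_n$, $\mathsf V(\ell,s)$ is the module with basis $v_1,\dots,v_\ell$ and action $a.v_j=v_{j+1}$ ($j<\ell$), $a.v_\ell=0$, $b.v_j=q^{s+j-1}v_j$, $c.v_j=q^{j-(s+\ell)}v_j$, $d.v_1=0$, $d.v_j=\alpha_{j-1}(\ell)v_{j-1}$ ($j>1$), $\alpha_i(\ell)=\frac{(q^i-1)(1-q^{i-\ell})}{q-1}$. With $[m]=1+q+\dots+q^{m-1}$, $[m]!=[m]\cdots[1]$, $[0]!=1$, the R-matrix is $\mathcal R=\frac1n\sum_{m,s,t=0}^{n-1}\frac{q^{-tm}}{[s]!}a^sb^t\otimes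 c^md^s$. $\mathsf R$ is the action of $\mathcal R$ on $\mathsf V\otimes\mathsf V$ ($a^sb^t$ on the first factor), $\sigma$ the flip, $\check{\mathsf R}=\sigma\mathsf R$, and $\check{\mathsf R}_i=\mathrm{id}^{\otimes(i-1)}\otimes\check{\mathsf R}\otimes\mathrm{id}^{\otimes(k-i-1)}$ on $\mathsf V^{\otimes k}$. *)

From HB Require Import structures.
From mathcomp Require Import all_boot all_order all_algebra.
From mathcomp Require Export mxtens.
Set Implicit Arguments. Unset Strict Implicit. Unset Printing Implicit Defensive.
Import Order.TTheory GRing.Theory.
Local Open Scope ring_scope.

(* Conventions: an operator on a space with basis indexed by 'I_m is a matrix
   M : 'M_m with  M i j = coefficient of basis vector i in M.(basis vector j),
   so composition of operators is matrix product *m.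
   Basis vector v_{j+1} of V(l,s) (paper, 1-based) is index j : 'I_l (0-based).
   The tensor product of operators is mathcomp-real-closed's tensmx ( *t ),
   basis of V (x) W indexed by mxtens_index (i, j) <-> v_i (x) w_j. *)

Section Dn.
Variable F : fieldType.
Variable q : F.
Variable n : nat.

Definition qint (m : nat) : F := \sum_(j < m) q ^+ j.
Definition qfact (s : nat) : F := \prod_(1 <= m < s.+1) qint m.

Definition alpha (i l : nat) : F :=
  (q ^+ i - 1) * (1 - q ^ (i%:Z - l%:Z)) / (q - 1).

Definition Va (l : nat) : 'M[F]_l :=
  \matrix_(i, j) ((i == j.+1 :> nat)%:R).
Definition Vb (l : nat) (s : int) : 'M[F]_l :=
  \matrix_(i, j) ((i == j)%:R * q ^ (s + (j : nat)%:Z)).          (* q^(s+j-1), 1-based j *)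
Definition Vc (l : nat) (s : int) : 'M[F]_l :=
  \matrix_(i, j) ((i == j)%:R * q ^ ((j : nat).+1%:Z - (s + l%:Z))). (* q^(j-(s+l)), 1-based j *)
Definition Vd (l : nat) : 'M[F]_l :=
  \matrix_(i, j) ((i.+1 == j :> nat)%:R * alpha j l).             (* d.v_j = alpha_{j-1}(l) v_{j-1} *)

Definition Rmat (l : nat) (s0 : int) : 'M[F]_(l * l) :=
  n%:R^-1 *: \sum_(m < n) \sum_(s < n) \sum_(t < n)
     ((q ^- (t * m)) / qfact s) *:
       ((Va l ^+ s *m Vb l s0 ^+ t) *t (Vc l s0 ^+ m *m Vd l ^+ s)).

Definition flipmx (l : nat) : 'M[F]_(l * l) :=
  \matrix_(x, y) ((((mxtens_unindex x).1 == (mxtens_unindex y).2)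
                 && ((mxtens_unindex x).2 == (mxtens_unindex y).1))%:R).

Definition Rcheck (l : nat) (s0 : int) : 'M[F]_(l * l) := flipmx l *m Rmat l s0.

Definition Rcheck_i (l : nat) (s0 : int) (k i : nat)
  : 'M[F]_(l ^ i.-1 * (l * l) * l ^ (k - i.+1)) :=
  (1%:M : 'M[F]_(l ^ i.-1)) *t Rcheck l s0 *t (1%:M : 'M[F]_(l ^ (k - i.+1))).

End Dn.

From HB Require Import structures.
From mathcomp Require Import all_boot all_order all_algebra.
From mathcomp Require Import ring.
Import GRing.Theory.
Local Open Scope ring_scope.

(* Put Q = q^(-r^2-2r) and x = q^r.  The proof computes Ř on V(3,r) ⊗ V(3,r)
   explicitly and then checks the cubic identity on a 9 x 9 matrix.
   1. On V(l,r) with l <= n the generator a is nilpotent (a^l = 0), so only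
      the terms s < l of the R-matrix survive, while b and c act diagonally;
      the remaining double sum over t, m is a discrete Fourier inversion
      (1/n) sum_(t,m) q^(-tm) q^(at) q^(bm) = q^(ab) for a primitive n-th root
      of unity q (Rmat_entry).
   2. For l = 3 this gives Ř = Q · M where M = mx9 (RV3coef x q) is an
      explicit 9 x 9 matrix with entries in q^±1, x^±1 (Rcheck_V3), and a
      finite computation shows (M - 1)(M + q^-2)(M - q^-3) = 0 whenever q and
      x are nonzero (RV3_cubic).
   3. A |-> id ⊗ A ⊗ id preserves sums, products and scalars, so the relation
      transfers from Ř to Ř_i on V^(⊗k). *)

Lemma exprz_subn (F : fieldType) (x : F) (a b : nat) :
  x != 0 -> x ^ (b%:Z - a%:Z) = x ^+ b / x ^+ a.
Proof. by move=> x_neq0; rewrite expfzDr // -exprnN. Qed.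

Section RootsOfUnity.
Context {F : fieldType} {n : nat} {q : F}.
Hypothesis q_prim : n.-primitive_root q.

Lemma prim_root_neq0 : q != 0.
Proof. by rewrite (prim_root_eq0 q_prim) -lt0n (prim_order_gt0 q_prim). Qed.

Lemma exprz_modn (a : int) : q ^ a = q ^+ `|(a %% n)%Z|%N.
Proof.
have n_neq0 : n%:Z != 0 by rewrite eqz_nat -lt0n (prim_order_gt0 q_prim).
rewrite {1}(divz_eq a n) expfzDr ?prim_root_neq0 // -exprz_exp exprzAC.
have -> : q ^ n%:Z = 1 by exact: prim_expr_order.
by rewrite exp1rz mul1r exprnP gez0_abs // modz_ge0.
Qed.

Lemma sum_expr_unity (w : F) : w ^+ n = 1 ->
  \sum_(t < n) w ^+ t = if w == 1 then n%:R else 0.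
Proof.
case: eqP => [->|/eqP w_neq1 wn1].
  by rewrite (eq_bigr (fun=> 1)) ?sumr_const ?card_ord // => t _; rewrite expr1n.
apply/eqP; move: (subrX1 w n); rewrite wn1 subrr => /esym/eqP.
by rewrite mulf_eq0 subr_eq0 (negPf w_neq1).
Qed.

(* Discrete Fourier inversion: the double sum over t, m in the R-matrix
   turns the diagonal actions of b^t and c^m into the phase q^(a b). *)
Lemma fourier_inversion (a b : int) :
  n%:R^-1 * \sum_(m < n) \sum_(t < n) (q ^- (t * m) * (q ^ a) ^+ t * (q ^ b) ^+ m)
  = q ^ (a * b).
Proof.
set A := `|(a %% n)%Z|%N.
have n_gt0 := prim_order_gt0 q_prim.
have A_def : A%:Z = (a %% n)%Z by rewrite /A gez0_abs // modz_ge0 // eqz_nat -lt0n.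
have A_lt : (A < n)%N by rewrite -ltz_nat A_def ltz_pmod // ltz_nat.
have inner (m : 'I_n) : \sum_(t < n) (q ^- (t * m) * (q ^+ A) ^+ t * (q ^ b) ^+ m)
    = (q ^ b) ^+ m * (if A == m then n%:R else 0).
  rewrite -mulr_suml mulrC; congr (_ * _).
  rewrite (eq_bigr (fun t : 'I_n => (q ^+ A / q ^+ m) ^+ t)); last first.
    by move=> t _; rewrite exprMn exprVn -!exprM mulnC mulrC.
  rewrite sum_expr_unity; last first.
    by rewrite exprMn exprVn !(exprAC _ _ n) (prim_expr_order q_prim) !expr1n invr1 mulr1.
  have qm_neq0 : q ^+ m != 0 by rewrite expf_neq0 // prim_root_neq0.
  have -> : (q ^+ A / q ^+ m == 1) = (q ^+ A == q ^+ m).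
    by apply/eqP/eqP => [/divr1_eq|->]; rewrite ?divff.
  by rewrite (eq_prim_root_expr q_prim) !modn_small.
rewrite exprz_modn -/A (eq_bigr _ (fun m _ => inner m)).
rewrite (bigD1 (Ordinal A_lt)) //= eqxx big1 => [|m]; last first.
  by rewrite -val_eqE /= eq_sym => /negPf ->; rewrite mulr0.
rewrite addr0 mulrCA mulVf ?(prim_root_natf_neq0 q_prim) // mulr1.
by rewrite exprnP exprz_exp [in RHS]exprz_modn [in LHS]exprz_modn A_def modzMmr mulrC.
Qed.

Lemma prim_root_sub1_neq0 : (1 < n)%N -> q - 1 != 0.
Proof.
move=> n_gt1; rewrite subr_eq0 -(expr1 q) -(prim_order_dvd q_prim).
by rewrite dvdn1 gtn_eqF.
Qed.

Lemma prim_root_add1_neq0 : (2 < n)%N -> 1 + q != 0.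
Proof.
move=> n_gt2; rewrite addrC addr_eq0; apply: contraTneq n_gt2 => q_eqN1.
have : (n %| 2)%N by rewrite (prim_order_dvd q_prim) q_eqN1 sqrrN expr1n.
by move/dvdn_leq => /(_ isT); rewrite ltnNge => ->.
Qed.

End RootsOfUnity.

Lemma diag_mx_exp (R : comPzRingType) (l : nat) (d : 'rV[R]_l) (t : nat) :
  diag_mx d ^+ t = diag_mx (\row_j d 0 j ^+ t).
Proof.
elim: t => [|t IH].
  by apply/matrixP => i j; rewrite !mxE expr0.
rewrite exprS IH -mulmxE mulmx_diag; congr diag_mx.
by apply/matrixP => i j; rewrite !mxE exprS.
Qed.

Section ActionMatrices.
Variables (F : fieldType) (q : F).

Lemma Vb_diag (l : nat) (s : int) :
  Vb q l s = diag_mx (\row_(j < l) q ^ (s + (j : nat)%:Z)).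
Proof.
by apply/matrixP => i j; rewrite !mxE; case: eqP => [->|]; rewrite ?mul1r ?mul0r.
Qed.

Lemma Vc_diag (l : nat) (s : int) :
  Vc q l s = diag_mx (\row_(j < l) q ^ ((j : nat).+1%:Z - (s + l%:Z))).
Proof.
by apply/matrixP => i j; rewrite !mxE; case: eqP => [->|]; rewrite ?mul1r ?mul0r.
Qed.

Lemma Va_exp (l s : nat) : Va F l ^+ s = \matrix_(i, j) (((i : nat) == (j + s)%N)%:R).
Proof.
elim: s => [|s IH].
  by apply/matrixP => i j; rewrite !mxE addn0.
apply/matrixP => i j; rewrite exprSr IH !mxE.
have [j1_lt|j1_ge] := ltnP j.+1 l.
  rewrite (bigD1 (Ordinal j1_lt)) //= big1 => [|k k_neq]; rewrite !mxE.
    by rewrite eqxx mulr1 addr0 addnS addSn.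
  by rewrite -val_eqE /= in k_neq; rewrite (negPf k_neq) mulr0.
rewrite big1 => [|k _]; last first.
  by rewrite !mxE (@ltn_eqF k j.+1) ?mulr0 // (leq_trans (ltn_ord k) j1_ge).
rewrite ltn_eqF // addnS ltnS (leq_trans _ (leq_addr s j)) //.
by rewrite -ltnS (leq_trans (ltn_ord i) j1_ge).
Qed.

Lemma Va_exp_eq0 (l s : nat) : (l <= s)%N -> Va F l ^+ s = 0.
Proof.
move=> l_le_s; apply/matrixP => i j; rewrite Va_exp !mxE ltn_eqF //.
by rewrite (leq_trans (ltn_ord i)) // (leq_trans l_le_s) // leq_addl.
Qed.

End ActionMatrices.

Section RMatrixEntries.
Context {F : fieldType} {n : nat} {q : F}.
Hypothesis q_prim : n.-primitive_root q.
Variables (l : nat) (r : int).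
Hypothesis l_le_n : (l <= n)%N.

(* Each entry of R on V(l,r) ⊗ V(l,r): only the terms s < l survive, and
   the Fourier inversion collapses the sums over t and m into one phase. *)
Lemma Rmat_entry (i1 i2 j1 j2 : 'I_l) :
  Rmat q n l r (mxtens_index (i1, i2)) (mxtens_index (j1, j2)) =
  (\sum_(s < l) (qfact q s)^-1 * (Va F l ^+ s) i1 j1 * (Vd q l ^+ s) i2 j2) *
  q ^ ((r + (j1 : nat)%:Z) * ((i2 : nat).+1%:Z - (r + l%:Z))).
Proof.
set a := r + _; set b := _ - _.
rewrite -(fourier_inversion q_prim a b).
set g := fun s : nat => (qfact q s)^-1 * (Va F l ^+ s) i1 j1 * (Vd q l ^+ s) i2 j2.
have -> : \sum_(s < l) g s = \sum_(s < n) g s.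
  rewrite (big_ord_widen n g l_le_n) [RHS](bigID (fun s : 'I_n => (s < l)%N)) /=.
  rewrite [X in _ = _ + X]big1 ?addr0 // => s; rewrite -leqNgt => l_le_s.
  by rewrite /g Va_exp_eq0 // mxE mulr0 mul0r.
have term (m s t : 'I_n) :
  (((q ^- (t * m)) / qfact q s) *:
     ((Va F l ^+ s *m Vb q l r ^+ t) *t (Vc q l r ^+ m *m Vd q l ^+ s)))
    (mxtens_index (i1, i2)) (mxtens_index (j1, j2))
  = g s * (q ^- (t * m) * (q ^ a) ^+ t * (q ^ b) ^+ m).
  rewrite mxE tensmxE Vb_diag Vc_diag !diag_mx_exp mul_mx_diag mul_diag_mx !mxE /g.
  ring.
rewrite /Rmat mxE summxE mulrCA; congr (_ * _).
rewrite mulr_sumr; apply: eq_bigr => m _.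
rewrite summxE mulr_suml; apply: eq_bigr => s _.
by rewrite summxE mulr_sumr; apply: eq_bigr => t _; rewrite term.
Qed.

End RMatrixEntries.

Lemma Rcheck_entry (F : fieldType) (q : F) (n l : nat) (r : int)
    (i1 i2 j1 j2 : 'I_l) :
  Rcheck q n l r (mxtens_index (i1, i2)) (mxtens_index (j1, j2)) =
  Rmat q n l r (mxtens_index (i2, i1)) (mxtens_index (j1, j2)).
Proof.
rewrite /Rcheck mxE (bigD1 (mxtens_index (i2, i1))) //= big1 => [|z z_neq].
  by rewrite mxE !mxtens_indexK /= !eqxx mul1r addr0.
case: (mxtens_indexP z) z_neq => k1 k2 z_neq.
rewrite mxE !mxtens_indexK /=.
case: eqP => [e1|]; case: eqP => [e2|] //=; rewrite ?mul0r //.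
by move: z_neq; rewrite e1 e2 eqxx.
Qed.

Section NineByNine.
Context {F : fieldType}.

(* 9 x 9 matrices given by their entries as functions of natural indices;
   products and scalar shifts are then computed by explicit finite sums. *)
Definition mx9 (f : nat -> nat -> F) : 'M[F]_(3 * 3) := \matrix_(i, j) f i j.

Definition sum9 (f : nat -> F) : F :=
  f 0%N + f 1%N + f 2%N + f 3%N + f 4%N + f 5%N + f 6%N + f 7%N + f 8%N.

Lemma mulmx_mx9 (f g : nat -> nat -> F) :
  mx9 f *m mx9 g = mx9 (fun i j => sum9 (fun k => f i k * g k j)).
Proof.
apply/matrixP => i j; rewrite !mxE !big_ord_recr big_ord0 /= add0r.
by rewrite !mxE.
Qed.

Lemma add_mx9_scalar (f : nat -> nat -> F) (c : F) :
  mx9 f + c%:M = mx9 (fun i j => f i j + (if i == j :> nat then c else 0)).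
Proof.
apply/matrixP => i j; rewrite !mxE -val_eqE /=.
by case: eqP => _; rewrite ?mulr1n ?mulr0n.
Qed.

(* Ř / q^(-r^2-2r) on V(3,r) ⊗ V(3,r) as a function of x = q^r: the basis
   vector v_a ⊗ v_b has index 3a + b (0-based) and the entry (i, j) is the
   coefficient of basis vector i in the image of basis vector j.  It is block
   diagonal along the weight a + b of the basis vectors. *)
Definition RV3coef (x q : F) (i j : nat) : F :=
  match i, j with
  | 0, 0 => 1
  | 1, 3 => x^-1 * q^-2
  | 1, 1 => 1 - q^-2
  | 2, 6 => x^-2 * q^-4
  | 2, 4 => (1 - q^-2) * x^-1 * q^-2
  | 2, 2 => (1 - q^-2) * (1 - q^-1)
  | 3, 1 => x
  | 4, 4 => q^-1
  | 4, 2 => (q - q^-1) * x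
  | 5, 7 => x^-1 * q^-2
  | 5, 5 => (q - q^-1) * q^-1
  | 6, 2 => x ^+ 2
  | 7, 5 => x
  | 8, 8 => 1
  | _, _ => 0
  end.

Lemma RV3_cubic (x q : F) : x != 0 -> q != 0 ->
  let M := mx9 (RV3coef x q) in
  (M + (-1)%:M) *m (M + (q ^- 2)%:M) *m (M + (- q ^- 3)%:M) = 0.
Proof.
move=> x_neq0 q_neq0 M; rewrite /M !add_mx9_scalar !mulmx_mx9.
apply/matrixP => -[i i_lt] [j j_lt]; rewrite !mxE /=.
do 9?[case: i i_lt => [|i] i_lt //]; do 9?[case: j j_lt => [|j] j_lt //].
all: rewrite /sum9 /=; field; by rewrite ?x_neq0 ?q_neq0.
Qed.

End NineByNine.

Section V3.
Context {F : fieldType} {n : nat} {q : F}.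
Hypothesis q_prim : n.-primitive_root q.
Hypothesis n_ge3 : (3 <= n)%N.
Variable r : int.

Let q_neq0 : q != 0 := prim_root_neq0 q_prim.

Lemma alphaE (i l : nat) :
  alpha q i l = (q ^+ i - 1) * (1 - q ^+ i / q ^+ l) / (q - 1).
Proof. by rewrite /alpha exprz_subn. Qed.

Lemma qfact_small : [/\ qfact q 0 = 1, qfact q 1 = 1 & qfact q 2 = 1 + q].
Proof.
rewrite /qfact /qint big_geq // big_nat1 big_ord1 expr0; split => //.
by rewrite big_nat_recr //= big_nat1 !big_ord_recr !big_ord0 /= !add0r expr0 expr1 mul1r.
Qed.

Lemma Vd_sq :
  Vd q 3 ^+ 2 = \matrix_(i, j) (((i : nat).+2 == j)%:R * (alpha q 1 3 * alpha q 2 3)).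
Proof.
rewrite expr2; apply/matrixP => -[[|[|[|?]]] ?] -[[|[|[|?]]] ?] //.
all: by rewrite !mxE !big_ord_recr big_ord0 /= !mxE /=
  ?mulr0n ?mulr1n ?mul0r ?mulr0 ?add0r ?addr0 ?mul1r.
Qed.

Lemma phase_split (a b : nat) :
  q ^ ((r + a%:Z) * (b.+1%:Z - (r + 3%:Z))) =
  q ^ (- r ^+ 2 - 2 * r) * ((q ^ r) ^+ b / (q ^ r) ^+ a)
    * (q ^+ (a * b) / q ^+ (2 * a)).
Proof.
have -> : (r + a%:Z) * (b.+1%:Z - (r + 3%:Z)) =
    (- r ^+ 2 - 2 * r) + r * (b%:Z - a%:Z) + ((a * b)%N%:Z - (2 * a)%N%:Z).
  by rewrite !PoszM -addn1 PoszD; ring.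
have x_neq0 : q ^ r != 0 by rewrite expfz_neq0.
by rewrite !expfzDr // -exprz_exp exprz_subn // -exprnN.
Qed.

Lemma Rcheck_V3 :
  Rcheck q n 3 r = q ^ (- r ^+ 2 - 2 * r) *: mx9 (RV3coef (q ^ r) q).
Proof.
have q_sub1 := prim_root_sub1_neq0 q_prim (ltnW n_ge3).
have q_add1 := prim_root_add1_neq0 q_prim n_ge3.
have x_neq0 : q ^ r != 0 by rewrite expfz_neq0.
have [qf0 qf1 qf2] := qfact_small.
apply/matrixP => X Y.
case: (mxtens_indexP X) => i1 i2; case: (mxtens_indexP Y) => j1 j2.
rewrite Rcheck_entry (Rmat_entry q_prim _ _ n_ge3) phase_split /mx9 !mxE.
rewrite !big_ord_recr big_ord0 /= qf0 qf1 qf2 expr0 expr1 !Va_exp Vd_sq !alphaE.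
case: i1 => [[|[|[|?]]] ?] //; case: i2 => [[|[|[|?]]] ?] //;
case: j1 => [[|[|[|?]]] ?] //; case: j2 => [[|[|[|?]]] ?] //.
all: rewrite !mxE /= ?alphaE.
all: field; by rewrite ?q_neq0 ?q_sub1 ?q_add1 ?x_neq0 ?oner_neq0.
Qed.

Lemma Rcheck_V3_cubic :
  let Q := q ^ (- r ^+ 2 - 2 * r) in
  (Rcheck q n 3 r - Q%:M) *m (Rcheck q n 3 r + (Q * q ^- 2)%:M)
    *m (Rcheck q n 3 r - (Q * q ^- 3)%:M) = 0.
Proof.
move=> Q; have x_neq0 : q ^ r != 0 by rewrite expfz_neq0.
have shift (c : F) (A : 'M[F]_(3 * 3)) : Q *: A + (Q * c)%:M = Q *: (A + c%:M).
  by rewrite scalerDr scale_scalar_mx.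
have negM (c : F) : - (c%:M : 'M[F]_(3 * 3)) = (- c)%:M.
  by apply/matrixP => i j; rewrite !mxE mulNrn.
rewrite Rcheck_V3 -/Q !negM -[Q in (- Q)%:M]mulr1 -!mulrN !shift.
by rewrite -!scalemxAl -!scalemxAr -scalemxAl RV3_cubic // !scaler0.
Qed.

End V3.

Section Embedding.
Context {F : fieldType} (a b : nat) {m : nat}.

Definition embed_mx (A : 'M[F]_m) : 'M[F]_(a * m * b) :=
  (1%:M : 'M_a) *t A *t (1%:M : 'M_b).

Lemma embed_mxD (A B : 'M[F]_m) : embed_mx (A + B) = embed_mx A + embed_mx B.
Proof. by apply/matrixP => i j; rewrite !mxE mulrDr mulrDl. Qed.

Lemma embed_mxB (A B : 'M[F]_m) : embed_mx (A - B) = embed_mx A - embed_mx B.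
Proof. by apply/matrixP => i j; rewrite !mxE mulrBr mulrBl. Qed.

Lemma embed_mxM (A B : 'M[F]_m) : embed_mx (A *m B) = embed_mx A *m embed_mx B.
Proof. by rewrite /embed_mx !tensmx_mul !mul1mx. Qed.

Lemma embed_mx0 : embed_mx 0 = 0.
Proof. by rewrite /embed_mx tensmx0 tens0mx. Qed.

Lemma embed_scalar_mx (c : F) : embed_mx c%:M = c%:M.
Proof.
apply/matrixP => X Y.
case: (mxtens_indexP X) => X1 x3; case: (mxtens_indexP X1) => x1 x2.
case: (mxtens_indexP Y) => Y1 y3; case: (mxtens_indexP Y1) => y1 y2.
rewrite /embed_mx !tensmxE !mxE.
do 2 rewrite !(inj_eq (can_inj (@mxtens_indexK _ _))) !xpair_eqE.
by case: (x1 == y1); case: (x2 == y2); case: (x3 == y3);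
  rewrite /= ?mulr1n ?mulr0n ?mul1r ?mulr1 ?mul0r ?mulr0.
Qed.

End Embedding.

Theorem mainTheorem7 (F : closedFieldType) (charF0 : [pchar F] =i pred0)
  (n : nat) (n_ge5 : (5 <= n)%N) (q : F) (q_prim : n.-primitive_root q)
  (r : int) (k : nat) (k_ge2 : (2 <= k)%N) (i : nat)
  (i_ge1 : (1 <= i)%N) (i_le : (i <= k - 1)%N) :
  let Ri := Rcheck_i q n 3 r k i in
  (Ri - (q ^ (- r ^+ 2 - 2 * r))%:M)
    *m (Ri + (q ^ (- r ^+ 2 - 2 * r - 2))%:M)
    *m (Ri - (q ^ (- r ^+ 2 - 2 * r - 3))%:M) = 0.
Proof.
move=> Ri; set Q := q ^ (- r ^+ 2 - 2 * r).
have n_ge3 : (3 <= n)%N by apply: leq_trans n_ge5.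
have q_neq0 := prim_root_neq0 q_prim.
have shifted_exp (e : nat) : q ^ (- r ^+ 2 - 2 * r - e%:Z) = Q * q ^- e.
  by rewrite expfzDr // -exprnN.
rewrite (shifted_exp 2%N) (shifted_exp 3%N).
have -> : Ri = embed_mx (3 ^ i.-1) (3 ^ (k - i.+1)) (Rcheck q n 3 r) by [].
rewrite -!(embed_scalar_mx (3 ^ i.-1) (3 ^ (k - i.+1))).
rewrite -embed_mxB -embed_mxD -embed_mxB -!embed_mxM.
by rewrite (Rcheck_V3_cubic q_prim n_ge3) embed_mx0.
Qed.
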